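(* Let $\mathcal{P}=(\mathcal{R},\mathcal{F},\mathcal{D},\mathcal{B})$ be a ground Capacity Logic Program. If $K_1$ and $K_2$ are pairwise incompatible sets of capacity composite choices for $\mathcal{P}$ that are equivalent ($\omega_{K_1}=\omega_{K_2}$), then $\xi_c(K_1)=\xi_c(K_2)$.
   Context: All sets are finite; there are no function symbols. Belief domains: a belief domain $D$ has a finite nonempty frame of discernment $X_D$ and a mass function $\mathit{mass}(D,\cdot):\mathbb{P}(X_D)\to\mathbb{R}$ with $\mathit{mass}(D,\emptyset)=0$, $\mathit{mass}(D,A)\ge 0$, $\sum_{A\subseteq X_D}\mathit{mass}(D,A)=1$. For $A\subseteq X_D$: $\mathit{Belief}(D,A)=\sum_{B\subseteq A}\mathit{mass}(D,B)$, $\mathit{Plaus}(D,A)=1-\mathit{Belief}(D,X_D\setminus A)$. Capacity Logic Program (CaLP): a tuple $\mathcal{P}=(\mathcal{R},\mathcal{F},\mathcal{D},\mathcal{B})$ where $\mathcal{R}$ is a finite set of ground rules, $\mathcal{F}$ a finite set of ground probabilistic facts $p::f$ ($p\in[0,1]$, $f$ a ground atom), $\mathcal{D}$ a finite set of belief domains, and $\mathcal{B}$ the set of all ground belief facts $\mathit{belief}(D,B)$ with $D\in\mathcal{D}$, $B\subseteq X_D$. We write $\mathit{belief}(D,\neg B)$ for $\mathit{belief}(D,X_D\setminus B)$. Canonicalization: for a set $Bel$ of belief facts, $\mathrm{canon}(Bel)=\{\mathit{belief}(D,\bigcap_{\mathit{belief}(D,B_i)\in Bel}B_i)\mid D \text{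 a domain occurring in } Bel\}$; $Bel$ is consistent if $\mathrm{canon}(Bel)$ contains no fact with event $\emptyset$. Belief worlds: a belief world is $w=(\mathcal{R},\mathcal{F}',\mathcal{D},\mathcal{B}')$ with $\mathcal{F}'\subseteq\mathcal{F}$ and $\mathcal{B}'\subseteq\mathcal{B}$ consistent, canonical, and containing exactly one belief fact for every domain in $\mathcal{D}$. $W^{\mathcal{D}}_{\mathcal{P}}$ is the set of belief worlds. Capacity atomic choices: either an atomic Bayesian choice $(f,k)$ with $p::f\in\mathcal{F}$ and $k\in\{0,1\}$, or an atomic belief choice $\mathit{belief}(D,B)$ with $D\in\mathcal{D}$, $B\subseteq X_D$. For a set $\kappa$ of atomic choices, $Bay(\kappa)$ is its set of Bayesian choices and $Bel(\kappa)$ its set of belief choices. $\kappa$ is consistent if $Bay(\kappa)$ contains no pair $(f,0),(f,1)$ and $Bel(\kappa)$ is consistent. A capacity composite choice is a consistent set of capacity atomic choices. Compatible worlds: for a capacity composite choice $\kappa$, $\omega_\kappa$ is the set of belief worlds $(\mathcal{R},\mathcal{F}',\mathcal{D},\mathcal{B}')$ such that $f\in\mathcal{F}'$ for every $(f,1)\in\kappa$, $f\notin\mathcal{F}'$ for every $(f,0)\in\kappa$, and $\mathrm{canon}(Bel(\kappa))\subseteq\mathcal{B}'$. For a set $K$, $\omega_K=\bigcup_{\kappa\in K}\omega_\kappa$. $K_1,K_2$ are equivalent if $\omega_{K_1}=\omega_{K_2}$. Two capacity composite choices are incompatible if their union is not consistent; $K$ is pairwise incompatible if any two distinct elements are incompatible.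 Interval arithmetic: $[a,b]\,\widehat{\times}\,[c,d]=[ac,bd]$, $[a,b]\,\widehat{+}\,[c,d]=[a+c,b+d]$ (nonnegative intervals), with iterated versions $\widehat{\prod},\widehat{\sum}$. Capacity of capacity composite choices: $\rho_c(\kappa)=\prod_{(f,1)\in\kappa}p_f\prod_{(f,0)\in\kappa}(1-p_f)$, where $p_f$ is the probability of $f$ in $\mathcal{F}$. Then $\rho^{Comp}_{\mathcal{B}}(\kappa)=[\rho_c(\kappa),\rho_c(\kappa)]\ \widehat{\times}\ \widehat{\prod}_{\mathit{belief}(D,E)\in\mathrm{canon}(Bel(\kappa))}[\mathit{Belief}(D,E),\mathit{Plaus}(D,E)]$, and for a pairwise incompatible set $K$, $\xi_c(K)=\widehat{\sum}_{\kappa\in K}\rho^{Comp}_{\mathcal{B}}(\kappa)$. *)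

From HB Require Import structures.
From mathcomp Require Import all_boot all_order all_algebra.
Set Implicit Arguments. Unset Strict Implicit. Unset Printing Implicit Defensive.
Import Order.TTheory GRing.Theory Num.Theory.
Local Open Scope ring_scope.

(* Ground Capacity Logic Programs.
   - Fct : finite type indexing the probabilistic facts p::f of F, prob f = p_f.
   - Dom : finite type of belief domains; U : a finite universe containing all
     frames; X D : {set U} is the frame of discernment of D.
   - mass D A : the mass function of D (only its values on subsets of X D
     matter).
   The rules R play no role in worlds' identity nor in the capacities, so they
   are omitted (every belief world contains the same R). *)

Section CaLP.
Variable R : realFieldType.
Variables (Fct Dom U : finType).
Variable prob : Fct -> R.
Variable X : Dom -> {set U}.
Variable mass : Dom -> {set U} -> R.

Definition is_mass_assignment : Prop :=
  forall D : Dom,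
    [/\ mass D set0 = 0,
        (forall A : {set U}, A \subset X D -> 0 <= mass D A)
      & \sum_(A : {set U} | A \subset X D) mass D A = 1].

Definition Belief (D : Dom) (A : {set U}) : R :=
  \sum_(B : {set U} | B \subset A) mass D B.

Definition Plaus (D : Dom) (A : {set U}) : R :=
  1 - Belief D (X D :\: A).

Definition belief_fact := (Dom * {set U})%type.
(* inl (f,k) : atomic Bayesian choice (f,k) ; inr (D,B) : belief(D,B) *)
Definition atomic := ((Fct * bool) + belief_fact)%type.

Definition Bay (k : {set atomic}) : {set Fct * bool} := [set c | inl c \in k].
Definition BelS (k : {set atomic}) : {set belief_fact} := [set b | inr b \in k].

Definition canon (S : {set belief_fact}) : {set belief_fact} :=
  [set (D, \bigcap_(b in S | b.1 == D) b.2) | D in [set b.1 | b in S]].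

Definition bel_consistent (S : {set belief_fact}) : Prop :=
  forall b, b \in canon S -> b.2 != set0.

Definition consistent (k : {set atomic}) : Prop :=
  (forall f : Fct, ~ ((f, false) \in Bay k /\ (f, true) \in Bay k))
  /\ bel_consistent (BelS k).

(* a capacity composite choice: a consistent set of capacity atomic choices
   (belief atoms must be ground belief facts of B, i.e. B subset of X_D) *)
Definition composite_choice (k : {set atomic}) : Prop :=
  consistent k /\ (forall b, b \in BelS k -> b.2 \subset X b.1).

(* belief worlds (R, F', D, B') represented by (F', B') *)
Definition is_belief_world (Fp : {set Fct}) (Bp : {set belief_fact}) : Prop :=
  [/\ (forall b, b \in Bp -> b.2 \subset X b.1),
      bel_consistent Bp,
      canon Bp = Bp
    & forall D : Dom, exists! B : {set U}, (D, B) \in Bp].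

Definition in_omega (k : {set atomic}) (Fp : {set Fct}) (Bp : {set belief_fact})
  : Prop :=
  [/\ (forall f, (f, true) \in Bay k -> f \in Fp),
      (forall f, (f, false) \in Bay k -> f \notin Fp)
    & canon (BelS k) \subset Bp].

Definition in_omegaK (K : {set {set atomic}}) (Fp : {set Fct})
  (Bp : {set belief_fact}) : Prop :=
  exists2 k, k \in K & in_omega k Fp Bp.

Definition equivalent (K1 K2 : {set {set atomic}}) : Prop :=
  forall Fp Bp, is_belief_world Fp Bp -> (in_omegaK K1 Fp Bp <-> in_omegaK K2 Fp Bp).

Definition incompatible (k1 k2 : {set atomic}) : Prop := ~ consistent (k1 :|: k2).

Definition pairwise_incompatible (K : {set {set atomic}}) : Prop :=
  forall k1 k2, k1 \in K -> k2 \in K -> k1 != k2 -> incompatible k1 k2.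

(* interval arithmetic on pairs (lower, upper) *)
Definition imul (a b : R * R) : R * R := (a.1 * b.1, a.2 * b.2).
Definition iadd (a b : R * R) : R * R := (a.1 + b.1, a.2 + b.2).

Definition rho_c (k : {set atomic}) : R :=
  (\prod_(f : Fct | (f, true) \in Bay k) prob f) *
  (\prod_(f : Fct | (f, false) \in Bay k) (1 - prob f)).

Definition rho_comp (k : {set atomic}) : R * R :=
  imul (rho_c k, rho_c k)
       (\big[imul/(1, 1)]_(b in canon (BelS k)) (Belief b.1 b.2, Plaus b.1 b.2)).

Definition xi_c (K : {set {set atomic}}) : R * R :=
  \big[iadd/(0, 0)]_(k in K) rho_comp k.

End CaLP.

From HB Require Import structures.
From mathcomp Require Import all_boot all_order all_algebra.
Import Order.TTheory GRing.Theory Num.Theory.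
Local Open Scope ring_scope.
Set Implicit Arguments. Unset Strict Implicit. Unset Printing Implicit Defensive.

(* A composite choice k determines its total world: the belief world whose
   belief on each domain D is X_D cut down by all beliefs of k on D.  Fix a
   total assignment of the probabilistic facts.  Two members of a pairwise
   incompatible K that agree with it and have the same total world would be
   compatible, so k |-> total world is injective there.  If omega_K1 = omega_K2,
   the total world of k in K1 is covered by some k' in K2, whose total world is
   covered by some k'' in K1; k and k'' are compatible, hence equal, and then k
   and k' have the same total world.  Expanding rho_c over fact assignments and
   using Belief D X_D = Plaus D X_D = 1 (so the capacity product of k depends
   only on its total world), both bounds of xi_c become the same sums. *)

Section Canonicalization.
Variables (Dom U : finType).
Notation bf := (belief_fact Dom U).

Definition bel_dom (S : {set bf}) : {set Dom} := [set b.1 | b in S].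

Definition bel_meet (S : {set bf}) (D : Dom) : {set U} :=
  \bigcap_(b in S | b.1 == D) b.2.

Lemma canonE (S : {set bf}) : canon S = [set (D, bel_meet S D) | D in bel_dom S].
Proof. by []. Qed.

Lemma bel_meet_notdom (S : {set bf}) D : D \notin bel_dom S -> bel_meet S D = setT.
Proof.
move=> nD; rewrite /bel_meet big_pred0 // => b; apply/negP => /andP[bS /eqP eD].
by move: nD; rewrite -eD => /negP; apply; apply/imsetP; exists b.
Qed.

Lemma bel_meet_sub (X : Dom -> {set U}) (S : {set bf}) D :
  (forall b, b \in S -> b.2 \subset X b.1) ->
  D \in bel_dom S -> bel_meet S D \subset X D.
Proof.
move=> hS /imsetP[b bS ->]; apply: subset_trans (hS b bS).
by apply: bigcap_inf; rewrite bS eqxx.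
Qed.

Lemma bel_meetU (S1 S2 : {set bf}) D :
  bel_meet (S1 :|: S2) D = bel_meet S1 D :&: bel_meet S2 D.
Proof.
apply/setP => x; rewrite inE; apply/bigcapP/andP.
  by move=> h; split; apply/bigcapP => b /andP[bS eD]; apply: h;
    rewrite inE bS ?orbT eD.
move=> [/bigcapP h1 /bigcapP h2] b; rewrite inE => /andP[/orP[] bS eD].
  by apply: h1; rewrite bS.
by apply: h2; rewrite bS.
Qed.

Lemma bel_domU (S1 S2 : {set bf}) D :
  (D \in bel_dom (S1 :|: S2)) = (D \in bel_dom S1) || (D \in bel_dom S2).
Proof.
apply/imsetP/orP.
  by move=> [b]; rewrite inE => /orP[] bS ->; [left|right]; apply/imsetP; exists b.
by move=> [] /imsetP[b bS ->]; exists b; rewrite // inE bS ?orbT.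
Qed.

Variable Fct : finType.
Notation atm := (atomic Fct Dom U).

Lemma BelSU (k1 k2 : {set atm}) : BelS (k1 :|: k2) = BelS k1 :|: BelS k2.
Proof. by apply/setP => b; rewrite !inE. Qed.

Lemma BayU (k1 k2 : {set atm}) : Bay (k1 :|: k2) = Bay k1 :|: Bay k2.
Proof. by apply/setP => b; rewrite !inE. Qed.

End Canonicalization.

Section TotalWorlds.
Variables (Fct Dom U : finType) (X : Dom -> {set U}).
Notation atm := (atomic Fct Dom U).
Notation bf := (belief_fact Dom U).
Hypothesis hX : forall D, X D != set0.

Definition total_event (k : {set atm}) (D : Dom) : {set U} :=
  X D :&: bel_meet (BelS k) D.

Definition total_world (k : {set atm}) : {set bf} :=
  [set (D, total_event k D) | D in [set: Dom]].

Lemma mem_total_world k D B : ((D, B) \in total_world k) = (B == total_event k D).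
Proof.
apply/imsetP/eqP; first by move=> [D' _ [-> ->]].
by move=> ->; exists D.
Qed.

Definition agrees (k : {set atm}) (Fp : {set Fct}) : bool :=
  [forall f, (((f, true) \in Bay k) ==> (f \in Fp)) &&
             (((f, false) \in Bay k) ==> (f \notin Fp))].

Lemma agreesP k (Fp : {set Fct}) :
  reflect ((forall f, (f, true) \in Bay k -> f \in Fp) /\
           (forall f, (f, false) \in Bay k -> f \notin Fp)) (agrees k Fp).
Proof.
apply: (iffP forallP).
  by move=> h; split=> f; have /andP[/implyP ? /implyP ?] := h f.
by move=> [h1 h2] f; apply/andP; split; apply/implyP; [apply: h1 | apply: h2].
Qed.

Lemma in_omegaP k (Fp : {set Fct}) (Bp : {set bf}) :
  in_omega k Fp Bp <-> agrees k Fp /\ canon (BelS k) \subset Bp.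
Proof.
split; first by move=> [h1 h2 h3]; split => //; apply/agreesP.
by move=> [/agreesP[h1 h2] h3].
Qed.

Lemma in_omega_total_event k1 k2 (Fp : {set Fct}) : in_omega k2 Fp (total_world k1) ->
  forall D, D \in bel_dom (BelS k2) -> bel_meet (BelS k2) D = total_event k1 D.
Proof.
move=> /in_omegaP[_ /subsetP hs] D hD; apply/eqP; rewrite -mem_total_world.
by apply: hs; rewrite canonE; apply/imsetP; exists D.
Qed.

Lemma agrees_Bay_consistent k1 k2 (Fp : {set Fct}) : agrees k1 Fp -> agrees k2 Fp ->
  forall f, ~ ((f, false) \in Bay (k1 :|: k2) /\ (f, true) \in Bay (k1 :|: k2)).
Proof.
move=> /agreesP[t1 f1] /agreesP[t2 f2] f; rewrite BayU !in_setU => -[h0 h1].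
have : f \notin Fp by case/orP: h0 => h; [apply: f1 | apply: f2].
by case/orP: h1 => h; [rewrite t1 | rewrite t2].
Qed.

Section CompositeChoice.
Variable k : {set atm}.
Hypothesis cc : composite_choice X k.

Lemma total_event_dom D :
  D \in bel_dom (BelS k) -> total_event k D = bel_meet (BelS k) D.
Proof. by move=> hD; apply/setIidPr/bel_meet_sub => //; case: cc. Qed.

Lemma total_event_notdom D : D \notin bel_dom (BelS k) -> total_event k D = X D.
Proof. by move=> hD; rewrite /total_event bel_meet_notdom // setIT. Qed.

Lemma bel_meet_neq0 D : D \in bel_dom (BelS k) -> bel_meet (BelS k) D != set0.
Proof.
move=> hD; case: cc => [[_ hc] _]; apply: (hc (D, bel_meet (BelS k) D)).
by rewrite canonE; apply/imsetP; exists D.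
Qed.

Lemma total_in_omega (Fp : {set Fct}) : agrees k Fp -> in_omega k Fp (total_world k).
Proof.
move=> ha; apply/in_omegaP; split => //; apply/subsetP => b.
by rewrite canonE => /imsetP[D hD ->]; rewrite mem_total_world total_event_dom.
Qed.

Lemma total_event_neq0 D : total_event k D != set0.
Proof.
have [hD|hD] := boolP (D \in bel_dom (BelS k)).
  by rewrite total_event_dom // bel_meet_neq0.
by rewrite total_event_notdom.
Qed.

Lemma total_world_belief_world (Fp : {set Fct}) : is_belief_world X Fp (total_world k).
Proof.
have meetE D : bel_meet (total_world k) D = total_event k D.
  rewrite /bel_meet (big_pred1 (D, total_event k D)) // => -[D' B] /=.
  rewrite mem_total_world xpair_eqE andbC.
  by case: eqP => [->|_] //=; rewrite andbF.
have domE : bel_dom (total_world k) = setT.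
  apply/setP => D; rewrite inE; apply/imsetP.
  by exists (D, total_event k D); rewrite ?mem_total_world.
have canonW : canon (total_world k) = total_world k.
  by rewrite canonE domE; apply: eq_imset => D; rewrite meetE.
split => //.
- by move=> [D B]; rewrite mem_total_world => /eqP ->; apply: subsetIl.
- move=> [D B]; rewrite canonW mem_total_world => /eqP ->.
  exact: total_event_neq0.
- move=> D; exists (total_event k D).
  by split; [rewrite mem_total_world | move=> B; rewrite mem_total_world => /eqP].
Qed.

End CompositeChoice.

Lemma total_world_chain_consistent k1 k2 k3 (Fp : {set Fct}) :
  composite_choice X k1 -> composite_choice X k2 -> composite_choice X k3 ->
  agrees k1 Fp -> agrees k3 Fp ->
  in_omega k2 Fp (total_world k1) -> in_omega k3 Fp (total_world k2) ->
  consistent (k1 :|: k3).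
Proof.
move=> c1 c2 c3 a1 a3 o12 o23; split; first exact: agrees_Bay_consistent a1 a3.
rewrite /bel_consistent BelSU => b; rewrite canonE => /imsetP[D hD ->] /=.
rewrite bel_meetU; rewrite bel_domU in hD.
have [d1|d1] := boolP (D \in bel_dom (BelS k1)); last first.
  have d3 : D \in bel_dom (BelS k3) by move: hD; rewrite (negbTE d1).
  by rewrite bel_meet_notdom // setTI (in_omega_total_event o23) // (total_event_neq0 c2).
have sub3 : total_event k1 D \subset bel_meet (BelS k3) D.
  have [d3|d3] := boolP (D \in bel_dom (BelS k3)); last first.
    by rewrite bel_meet_notdom // subsetT.
  rewrite (in_omega_total_event o23) //.
  have [d2|d2] := boolP (D \in bel_dom (BelS k2)).
    by rewrite (total_event_dom c2) // (in_omega_total_event o12).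
  by rewrite (total_event_notdom (k := k2)) //; apply: subsetIl.
by rewrite -(total_event_dom c1) // (setIidPl sub3) (total_event_neq0 c1).
Qed.

Section Equivalent.
Variables K1 K2 : {set {set atm}}.
Hypothesis hK1 : forall k, k \in K1 -> composite_choice X k.
Hypothesis hK2 : forall k, k \in K2 -> composite_choice X k.
Hypothesis hpi1 : pairwise_incompatible K1.

Lemma total_world_inj (Fp : {set Fct}) :
  {in [set k in K1 | agrees k Fp] &, injective total_world}.
Proof.
move=> k1 k2; rewrite !inE => /andP[i1 a1] /andP[i2 a2] e.
apply/eqP; apply/negPn/negP => ne; apply: (hpi1 i1 i2 ne).
have c1 := hK1 i1; have c2 := hK1 i2.
apply: (total_world_chain_consistent c1 c1 c2 a1 a2); first exact: total_in_omega.
by rewrite e; apply: total_in_omega.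
Qed.

Hypothesis heq : equivalent X K1 K2.

Lemma total_world_covered k (Fp : {set Fct}) : k \in K1 -> agrees k Fp ->
  exists2 k', k' \in K2 & agrees k' Fp /\ total_world k' = total_world k.
Proof.
move=> i a; have c := hK1 i.
have [k' i' o'] : in_omegaK K2 Fp (total_world k).
  by apply/(heq (total_world_belief_world c Fp)); exists k => //; apply: total_in_omega.
have a' := ((in_omegaP _ _ _).1 o').1; have c' := hK2 i'.
have [k'' i'' o''] : in_omegaK K1 Fp (total_world k').
  by apply/(heq (total_world_belief_world c' Fp)); exists k' => //; apply: total_in_omega.
have a'' := ((in_omegaP _ _ _).1 o'').1.
have ek : k'' = k.
  apply/eqP; apply/negPn/negP => ne; rewrite eq_sym in ne.
  exact: (hpi1 i i'' ne) (total_world_chain_consistent c c' (hK1 i'') a a'' o' o'').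
subst k''; exists k' => //; split => //; apply: eq_imset => D; congr pair.
have [d'|d'] := boolP (D \in bel_dom (BelS k')).
  by rewrite (total_event_dom c') // (in_omega_total_event o').
have [d|d] := boolP (D \in bel_dom (BelS k)).
  by rewrite (total_event_dom c d) (in_omega_total_event o'' d).
by rewrite (total_event_notdom (k := k)) // (total_event_notdom (k := k')).
Qed.

End Equivalent.

Lemma equivalent_sym (K1 K2 : {set {set atm}}) : equivalent X K1 K2 -> equivalent X K2 K1.
Proof. by move=> heq Fp Bp w; apply: iff_sym; apply: heq. Qed.

Lemma total_world_image (K1 K2 : {set {set atm}}) (Fp : {set Fct}) :
  (forall k, k \in K1 -> composite_choice X k) ->
  (forall k, k \in K2 -> composite_choice X k) ->
  pairwise_incompatible K1 -> pairwise_incompatible K2 -> equivalent X K1 K2 ->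
  total_world @: [set k in K1 | agrees k Fp] =
  total_world @: [set k in K2 | agrees k Fp].
Proof.
move=> hK1 hK2 hpi1 hpi2 heq.
suff sub (L1 L2 : {set {set atm}}) : (forall k, k \in L1 -> composite_choice X k) ->
    (forall k, k \in L2 -> composite_choice X k) ->
    pairwise_incompatible L1 -> equivalent X L1 L2 ->
    total_world @: [set k in L1 | agrees k Fp] \subset
    total_world @: [set k in L2 | agrees k Fp].
  by apply/eqP; rewrite eqEsubset !sub //; apply: equivalent_sym.
move=> hL1 hL2 hpiL heqL; apply/subsetP => w /imsetP[k].
rewrite inE => /andP[i a] ->.
have [k' i' [a' <-]] := total_world_covered hL1 hL2 hpiL heqL i a.
by apply: imset_f; rewrite inE i' a'.
Qed.

End TotalWorlds.

Section Capacities.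
Variables (R : realFieldType) (Fct Dom U : finType) (X : Dom -> {set U}).
Notation atm := (atomic Fct Dom U).

Definition cap_prod (g : Dom -> {set U} -> R) (k : {set atm}) : R :=
  \prod_(b in canon (BelS k)) g b.1 b.2.

Lemma cap_prod_total_world (g : Dom -> {set U} -> R) k : (forall D, g D (X D) = 1) ->
  composite_choice X k -> cap_prod g k = \prod_(b in total_world X k) g b.1 b.2.
Proof.
move=> hg cc; have inj_pair (h : Dom -> {set U}) (A : {set Dom}) :
    {in A &, injective (fun D => (D, h D))} by move=> D1 D2 _ _ /(congr1 fst).
rewrite /cap_prod canonE /total_world !(big_imset _ (inj_pair _ _)) /=.
rewrite [RHS](bigID (mem (bel_dom (BelS k)))) /= [Y in _ = _ * Y]big1 ?mulr1.
  by apply: eq_big => [D | D hD]; rewrite ?in_setT // (total_event_dom cc).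
by move=> D /andP[_ hD]; rewrite (total_event_notdom X hD) hg.
Qed.

Lemma sum_cap_prod_agrees (g : Dom -> {set U} -> R) (K1 K2 : {set {set atm}})
    (Fp : {set Fct}) : (forall D, g D (X D) = 1) ->
  (forall D, X D != set0) ->
  (forall k, k \in K1 -> composite_choice X k) ->
  (forall k, k \in K2 -> composite_choice X k) ->
  pairwise_incompatible K1 -> pairwise_incompatible K2 -> equivalent X K1 K2 ->
  \sum_(k in [set k in K1 | agrees k Fp]) cap_prod g k =
  \sum_(k in [set k in K2 | agrees k Fp]) cap_prod g k.
Proof.
move=> hg hX hK1 hK2 hpi1 hpi2 heq.
have sumE (K : {set {set atm}}) : (forall k, k \in K -> composite_choice X k) ->
    pairwise_incompatible K ->
    \sum_(k in [set k in K | agrees k Fp]) cap_prod g k =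
    \sum_(w in total_world X @: [set k in K | agrees k Fp]) \prod_(b in w) g b.1 b.2.
  move=> hK hpi; rewrite big_imset; last exact: total_world_inj.
  by apply: eq_bigr => k; rewrite inE => /andP[i _]; apply: cap_prod_total_world (hK _ i).
by rewrite !sumE // (total_world_image hX Fp hK1 hK2 hpi1 hpi2 heq).
Qed.

Variable prob : Fct -> R.

Definition assignment_prob (phi : {ffun Fct -> bool}) : R :=
  \prod_f (if phi f then prob f else 1 - prob f).

Definition assignment_facts (phi : {ffun Fct -> bool}) : {set Fct} :=
  [set f | phi f].

(* Distribute the product over facts of the sums over the two values of each
   fact; the factor of a fact is 1 when k does not mention it since
   prob f + (1 - prob f) = 1. *)
Lemma rho_c_assignments (k : {set atm}) :
  (forall f, ~ ((f, false) \in Bay k /\ (f, true) \in Bay k)) ->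
  rho_c prob k = \sum_phi
    (if agrees k (assignment_facts phi) then assignment_prob phi else 0).
Proof.
move=> hc.
pose c f (b : bool) : R :=
  if (f, ~~ b) \notin Bay k then (if b then prob f else 1 - prob f) else 0.
have -> : rho_c prob k = \prod_f \sum_(b : bool) c f b.
  rewrite /rho_c !(big_mkcond (fun f => (f, _) \in Bay k)) -big_split /=.
  apply: eq_bigr => f _; rewrite big_bool /c /=.
  move: (hc f); case: ((f, true) \in Bay k); case: ((f, false) \in Bay k) => //= h.
  - by case: h.
  - by rewrite mulr1 addr0.
  - by rewrite mul1r add0r.
  - by rewrite mulr1 addrC subrK.
rewrite bigA_distr_bigA; apply: eq_bigr => phi _; rewrite /assignment_prob.
have [/agreesP[h1 h2] | /forallPn[f]] := boolP (agrees k (assignment_facts phi)).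
  apply: eq_bigr => f _; rewrite /c; case: ifPn => // /negbNE.
  by case e: (phi f) => /=; [move/h2 | move/h1]; rewrite inE e.
have -> : (f \in assignment_facts phi) = phi f by rewrite inE.
rewrite (bigD1 f) //= /c; case: (phi f) => /=;
  by rewrite ?implybT ?implybF ?andbT ?negbK /= => ->; rewrite mul0r.
Qed.

Definition weighted_cap (K : {set {set atm}}) (g : Dom -> {set U} -> R) : R :=
  \sum_(k in K) rho_c prob k * cap_prod g k.

Lemma weighted_cap_assignments (K : {set {set atm}}) (g : Dom -> {set U} -> R) :
  (forall k, k \in K -> composite_choice X k) ->
  weighted_cap K g = \sum_phi assignment_prob phi *
    \sum_(k in [set k in K | agrees k (assignment_facts phi)]) cap_prod g k.
Proof.
move=> hK; rewrite /weighted_cap.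
under eq_bigr => k hk do rewrite (rho_c_assignments (hK k hk).1.1) mulr_suml.
rewrite exchange_big /=; apply: eq_bigr => phi _; rewrite mulr_sumr.
rewrite [RHS](eq_bigl (fun k => (k \in K) && agrees k (assignment_facts phi)));
  last by move=> k; rewrite !inE.
by rewrite big_mkcondr /=; apply: eq_bigr => k _; case: ifP; rewrite ?mul0r.
Qed.

Variable mass : Dom -> {set U} -> R.

Lemma xi_cE (K : {set {set atm}}) :
  xi_c prob X mass K = (weighted_cap K (Belief mass), weighted_cap K (Plaus X mass)).
Proof.
rewrite /xi_c [LHS]surjective_pairing; congr pair.
  rewrite (@big_morph _ _ fst 0 +%R (0, 0) (@iadd R)) //; apply: eq_bigr => k _.
  by rewrite /rho_comp /imul /= (@big_morph _ _ fst 1 *%R (1, 1) (@imul R)).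
rewrite (@big_morph _ _ snd 0 +%R (0, 0) (@iadd R)) //; apply: eq_bigr => k _.
by rewrite /rho_comp /imul /= (@big_morph _ _ snd 1 *%R (1, 1) (@imul R)).
Qed.

Hypothesis hmass : is_mass_assignment X mass.

Lemma Belief_frame D : Belief mass D (X D) = 1.
Proof. by have [_ _ <-] := hmass D. Qed.

Lemma Plaus_frame D : Plaus X mass D (X D) = 1.
Proof.
rewrite /Plaus setDv /Belief (big_pred1 set0) => [|B]; last by rewrite subset0.
by have [-> _ _] := hmass D; rewrite subr0.
Qed.

End Capacities.

Theorem mainTheorem3 (R : realFieldType) (Fct Dom U : finType)
  (prob : Fct -> R) (X : Dom -> {set U}) (mass : Dom -> {set U} -> R)
  (hprob : forall f, 0 <= prob f <= 1)
  (hX : forall D, X D != set0)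
  (hmass : is_mass_assignment X mass)
  (K1 K2 : {set {set atomic Fct Dom U}})
  (hK1 : forall k, k \in K1 -> composite_choice X k)
  (hK2 : forall k, k \in K2 -> composite_choice X k)
  (hpi1 : pairwise_incompatible K1)
  (hpi2 : pairwise_incompatible K2)
  (heq : equivalent X K1 K2) :
  xi_c prob X mass K1 = xi_c prob X mass K2.
Proof.
rewrite !xi_cE !(weighted_cap_assignments _ _ hK1) !(weighted_cap_assignments _ _ hK2).
congr pair; apply: eq_bigr => phi _; congr (_ * _); apply: sum_cap_prod_agrees => //.
  exact: Belief_frame.
exact: Plaus_frame.
Qed.
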